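(* Let $\mathbb{Q}[y,z]$ be the polynomial ring and let $D$ be the unique derivation of $\mathbb{Q}[y,z]$ with $D(y)=z^2$ and $D(z)=yz$ (so that, with $y=\tan x$, $z=\sec x$, $D$ corresponds to $d/dx$). Define integers $R_{n,k}$, $W_{n,k}$, $W^{l}_{n,k}$ by $$D^n(y+z)=\sum_{k=0}^{n}R_{n,k}\,y^{n-k}z^{k+1}\ (n\ge 1),\qquad D^n(y)=\sum_{k=0}^{\lfloor (n-1)/2\rfloor}W_{n,k}\,y^{n-2k-1}z^{2k+2}\ (n\ge 1),\qquad D^n(z)=\sum_{k=0}^{\lfloor n/2\rfloor}W^{l}_{n,k}\,y^{n-2k}z^{2k+1}\ (n\ge 0),$$ with the convention that any of these numbers whose index $k$ lies outside the stated summation range is $0$. Then for $0\le k\le n$: (i) $R_{n+1,k}=(k+1)R_{n,k}+(n-k+2)R_{n,k-2}$ for all $n\ge 1$; (ii) $W_{n,k}=(2k+2)W_{n-1,k}+(n-2k)W_{n-1,k-1}$ for all $n\ge 2$; (iii) $W^{l}_{n,k}=(2k+1)W^{l}_{n-1,k}+(n-2k+1)W^{l}_{n-1,k-1}$ for all $n\ge 1$.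
   Context: The expansions are in the polynomial ring $\mathbb{Q}[y,z]$ (i.e. formally, without using $z^2=1+y^2$). *)

From HB Require Import structures.
From mathcomp Require Import all_boot all_order all_algebra.
From mathcomp Require Import mpoly.
Set Implicit Arguments. Unset Strict Implicit. Unset Printing Implicit Defensive.
Import Order.TTheory GRing.Theory Num.Theory.
Local Open Scope ring_scope.

Definition iy : 'I_2 := @Ordinal 2 0 isT.
Definition iz : 'I_2 := @Ordinal 2 1 isT.
Definition y : {mpoly rat[2]} := 'X_iy.
Definition z : {mpoly rat[2]} := 'X_iz.

(* The unique derivation D of Q[y,z] with D y = z^2 and D z = y z:
   D p = (dp/dy) * D y + (dp/dz) * D z. *)
Definition D (p : {mpoly rat[2]}) : {mpoly rat[2]} :=
  mderiv iy p * z ^+ 2 + mderiv iz p * (y * z).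

Definition coefyz (p : {mpoly rat[2]}) (a b : nat) : rat :=
  p@_(U_(iy) *+ a + U_(iz) *+ b)%MM.

Definition Rnk (n : nat) (k : int) : rat :=
  if (1 <= n)%N && (0 <= k) && (k <= n%:Z)
  then coefyz (iter n D (y + z)) (n - `|k|)%N (`|k| + 1)%N
  else 0.

Definition Wnk (n : nat) (k : int) : rat :=
  if (1 <= n)%N && (0 <= k) && (2 * k + 1 <= n%:Z)
  then coefyz (iter n D y) (n - 2 * `|k| - 1)%N (2 * `|k| + 2)%N
  else 0.

Definition Wlnk (n : nat) (k : int) : rat :=
  if (0 <= k) && (2 * k <= n%:Z)
  then coefyz (iter n D z) (n - 2 * `|k|)%N (2 * `|k| + 1)%N
  else 0.

From HB Require Import structures.
From mathcomp Require Import all_boot all_order all_algebra.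
From mathcomp Require Import mpoly.
From mathcomp Require Import zify.
Import Order.TTheory GRing.Theory Num.Theory.
Local Open Scope ring_scope.

(* Since D = z^2 d/dy + yz d/dz, the coefficient of y^a z^b in D p is
   (a+1) [y^(a+1) z^(b-2)] p + b [y^(a-1) z^b] p.  Read at the monomial
   indexing the left-hand side, this formula is each of the three
   recurrences; at the boundary indices one also uses that D p has no
   monomial free of z. *)

Definition mnm_yz (a b : nat) : 'X_{1..2} := (U_(iy) *+ a + U_(iz) *+ b)%MM.

Lemma ord2P (i : 'I_2) : i = iy \/ i = iz.
Proof. by case: i => [[|[|//]]] ?; [left | right]; apply/val_inj. Qed.

Lemma mnm_yz_y a b : mnm_yz a b iy = a.
Proof. by rewrite /mnm_yz mnmDE !mulmnE !mnm1E /= mul1n mul0n addn0. Qed.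

Lemma mnm_yz_z a b : mnm_yz a b iz = b.
Proof. by rewrite /mnm_yz mnmDE !mulmnE !mnm1E /= mul1n mul0n. Qed.

Lemma mnm_yzP (m m' : 'X_{1..2}) : m iy = m' iy -> m iz = m' iz -> m = m'.
Proof. by move=> eq_y eq_z; apply/mnmP => i; case: (ord2P i) => ->. Qed.

Lemma mnm_yzD a b c d : (mnm_yz a b + mnm_yz c d)%MM = mnm_yz (a + c) (b + d).
Proof. by apply: mnm_yzP; rewrite mnmDE !(mnm_yz_y, mnm_yz_z). Qed.

Lemma mnm_yzB a b c d : (mnm_yz a b - mnm_yz c d)%MM = mnm_yz (a - c) (b - d).
Proof. by apply: mnm_yzP; rewrite mnmBE !(mnm_yz_y, mnm_yz_z). Qed.

Lemma mnm_yz_Uy : U_(iy)%MM = mnm_yz 1 0.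
Proof. by apply: mnm_yzP; rewrite !(mnm_yz_y, mnm_yz_z, mnm1E). Qed.

Lemma mnm_yz_Uz : U_(iz)%MM = mnm_yz 0 1.
Proof. by apply: mnm_yzP; rewrite !(mnm_yz_y, mnm_yz_z, mnm1E). Qed.

Lemma mnm_yz_le a b c d : (mnm_yz a b <= mnm_yz c d)%MM = (a <= c)%N && (b <= d)%N.
Proof.
apply/mnm_lepP/andP => [le_ab_cd | [le_ac le_bd] i].
  by have := le_ab_cd iy; have := le_ab_cd iz; rewrite !(mnm_yz_y, mnm_yz_z).
by case: (ord2P i) => ->; rewrite !(mnm_yz_y, mnm_yz_z).
Qed.

Lemma mcoeffMX_if (n : nat) (R : nzRingType) (p : {mpoly R[n]}) (m k : 'X_{1..n}) :
  (p * 'X_[m])@_k = if (m <= k)%MM then p@_(k - m) else 0.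
Proof.
case: ifP => [le_mk | not_le_mk]; first by rewrite -{1}(submK le_mk) addmC mcoeffMX.
apply: memN_msupp_eq0; rewrite (perm_mem (msuppMX p m)).
by apply/mapP => -[m' _ km']; move: not_le_mk; rewrite km' lem_addr.
Qed.

Lemma z2_mpolyX : z ^+ 2 = 'X_[mnm_yz 0 2].
Proof. by rewrite /z mpolyXn /mnm_yz mulm0n add0m. Qed.

Lemma yz_mpolyX : y * z = 'X_[mnm_yz 1 1].
Proof. by rewrite /y /z -mpolyXD /mnm_yz !mulm1n. Qed.

Lemma coefyzE (p : {mpoly rat[2]}) (a b : nat) : coefyz p a b = p@_(mnm_yz a b).
Proof. by []. Qed.

Lemma coefyz_D (p : {mpoly rat[2]}) (a b : nat) :
  coefyz (D p) a b =
    (if (2 <= b)%N then coefyz p a.+1 (b - 2) *+ a.+1 else 0)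
  + (if (1 <= a)%N && (1 <= b)%N then coefyz p (a - 1) b *+ b else 0).
Proof.
rewrite !coefyzE /D mcoeffD z2_mpolyX yz_mpolyX !mcoeffMX_if !mnm_yz_le.
rewrite !mcoeff_mderiv mnm_yz_Uy mnm_yz_Uz !mnm_yzB !mnm_yzD mnm_yz_y mnm_yz_z.
rewrite !subn0 !addn0 addn1; congr (_ + _).
by case: ifP => // /andP[_ le_1b]; rewrite -[(b - 1).+1]addn1 subnK.
Qed.

Lemma coefyz_D_z0 (p : {mpoly rat[2]}) (a : nat) : coefyz (D p) a 0 = 0.
Proof. by rewrite coefyz_D /= andbF addr0. Qed.

Lemma coefyz_iterD_z0 (n : nat) (p : {mpoly rat[2]}) (a : nat) :
  (0 < n)%N -> coefyz (iter n D p) a 0 = 0.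
Proof. by case: n => // n _; rewrite iterS coefyz_D_z0. Qed.

Lemma Rnk_nat (n k : nat) : (1 <= n)%N -> (k <= n)%N ->
  Rnk n k = coefyz (iter n D (y + z)) (n - k) (k + 1).
Proof. by move=> n_gt0 le_kn; rewrite /Rnk n_gt0 lez_nat le_kn absz_nat. Qed.

Lemma Rnk_lt0 (n : nat) (k : int) : k < 0 -> Rnk n k = 0.
Proof. by rewrite /Rnk ltNge => /negbTE->; rewrite andbF. Qed.

Lemma Wnk_nat (n k : nat) : (2 * k + 1 <= n)%N ->
  Wnk n k = coefyz (iter n D y) (n - 2 * k - 1) (2 * k + 2).
Proof.
move=> le_kn; rewrite /Wnk absz_nat.
by have -> : (1 <= n)%N && (0 <= k%:Z) && (2 * k%:Z + 1 <= n%:Z) by apply/idP; lia.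
Qed.

Lemma Wnk_lt0 (n : nat) (k : int) : k < 0 -> Wnk n k = 0.
Proof. by rewrite /Wnk ltNge => /negbTE->; rewrite andbF. Qed.

Lemma Wnk_gt (n : nat) (k : int) : n%:Z < 2 * k + 1 -> Wnk n k = 0.
Proof. by rewrite /Wnk ltNge => /negbTE->; rewrite andbF. Qed.

Lemma Wlnk_nat (n k : nat) : (2 * k <= n)%N ->
  Wlnk n k = coefyz (iter n D z) (n - 2 * k) (2 * k + 1).
Proof.
move=> le_kn; rewrite /Wlnk absz_nat.
by have -> : (0 <= k%:Z) && (2 * k%:Z <= n%:Z) by apply/idP; lia.
Qed.

Lemma Wlnk_lt0 (n : nat) (k : int) : k < 0 -> Wlnk n k = 0.
Proof. by rewrite /Wlnk ltNge => /negbTE->. Qed.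

Lemma Wlnk_gt (n : nat) (k : int) : n%:Z < 2 * k -> Wlnk n k = 0.
Proof. by rewrite /Wlnk ltNge => /negbTE->; rewrite andbF. Qed.

Lemma Rnk_rec (n : nat) (k : int) : (1 <= n)%N -> 0 <= k -> k <= n%:Z ->
  Rnk n.+1 k = (k + 1)%:~R * Rnk n k + (n%:Z - k + 2)%:~R * Rnk n (k - 2).
Proof.
move=> n_gt0; case: k => // k _; rewrite lez_nat => le_kn.
have le_kn1 : (k <= n.+1)%N by apply: leqW.
rewrite !Rnk_nat // iterS coefyz_D -PoszD -pmulrn mulr_natl.
rewrite (_ : (1 <= n.+1 - k)%N && (1 <= k + 1)%N); last by apply/andP; split; lia.
rewrite (_ : (n.+1 - k - 1 = n - k)%N) 1?addrC; last lia.
congr (_ + _); have [lt_k2 | le_2k] := ltnP k 2.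
  rewrite Rnk_lt0 ?mulr0; last lia.
  case: ifP => // _; rewrite (_ : (k + 1 - 2 = 0)%N); last lia.
  by rewrite coefyz_iterD_z0 ?mul0rn.
have -> : k%:Z - 2 = (k - 2)%N :> int by lia.
have -> : n%:Z - k%:Z + 2 = (n - k + 2)%N :> int by lia.
rewrite Rnk_nat //; last lia.
rewrite -pmulrn mulr_natl.
rewrite (_ : (2 <= k + 1)%N); last lia.
have -> : (n.+1 - k).+1 = (n - k + 2)%N by lia.
have -> : (n - (k - 2) = n - k + 2)%N by lia.
by have -> : (k + 1 - 2 = k - 2 + 1)%N by lia.
Qed.

Lemma Wnk_rec (n : nat) (k : int) : (2 <= n)%N -> 0 <= k -> k <= n%:Z ->
  Wnk n k = (2 * k + 2)%:~R * Wnk (n - 1)%N k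
            + (n%:Z - 2 * k)%:~R * Wnk (n - 1)%N (k - 1).
Proof.
case: n => // m m_gt0; case: k => // k _ _; rewrite subn1 /=.
have -> : 2 * k%:Z + 2 = (2 * k + 2)%N :> int by lia.
have [le_km | lt_mk] := leqP (2 * k + 1) m.+1; last first.
  rewrite (@Wnk_gt m.+1 k); last lia.
  rewrite (@Wnk_gt m k) ?mulr0 ?add0r; last lia.
  have [le_km' | lt_mk'] := leqP (2 * k) m.+1; last by rewrite Wnk_gt ?mulr0 //; lia.
  have -> : m.+1%:Z - 2 * k%:Z = 0 by lia.
  by rewrite mul0r.
have -> : m.+1%:Z - 2 * k%:Z = (m.+1 - 2 * k)%N :> int by lia.
rewrite Wnk_nat // iterS coefyz_D addrC -!pmulrn.
rewrite (_ : (2 <= 2 * k + 2)%N = true); last lia.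
congr (_ + _).
  case: ifP => [/andP[le_1mk _] | not_le_1mk].
    rewrite Wnk_nat ?mulr_natl; last lia.
    by have -> : (m.+1 - 2 * k - 1 - 1 = m - 2 * k - 1)%N by lia.
  by rewrite Wnk_gt ?mulr0 //; move/negbT: not_le_1mk; lia.
case: k le_km => [|k] le_km.
  by rewrite Wnk_lt0 // mulr0 coefyz_iterD_z0 ?mul0rn.
rewrite (_ : k.+1%:Z - 1 = k); last lia.
rewrite Wnk_nat ?mulr_natl; last lia.
have -> : (m.+1 - 2 * k.+1 - 1).+1 = (m - 2 * k - 1)%N by lia.
have -> : (m.+1 - 2 * k.+1 = m - 2 * k - 1)%N by lia.
by have -> : (2 * k.+1 + 2 - 2 = 2 * k + 2)%N by lia.
Qed.

Lemma Wlnk_rec (n : nat) (k : int) : (1 <= n)%N -> 0 <= k -> k <= n%:Z ->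
  Wlnk n k = (2 * k + 1)%:~R * Wlnk (n - 1)%N k
             + (n%:Z - 2 * k + 1)%:~R * Wlnk (n - 1)%N (k - 1).
Proof.
case: n => // m _; case: k => // k _ _; rewrite subn1 /=.
have -> : 2 * k%:Z + 1 = (2 * k + 1)%N :> int by lia.
have [le_km | lt_mk] := leqP (2 * k) m.+1; last first.
  rewrite (@Wlnk_gt m.+1 k); last lia.
  rewrite (@Wlnk_gt m k) ?mulr0 ?add0r; last lia.
  have [le_km' | lt_mk'] := leqP (2 * k) m.+2; last by rewrite Wlnk_gt ?mulr0 //; lia.
  have -> : m.+1%:Z - 2 * k%:Z + 1 = 0 by lia.
  by rewrite mul0r.
have -> : m.+1%:Z - 2 * k%:Z + 1 = (m.+2 - 2 * k)%N :> int by lia.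
rewrite Wlnk_nat // iterS coefyz_D addrC -!pmulrn.
congr (_ + _).
  case: ifP => [/andP[le_1mk _] | not_le_1mk].
    rewrite Wlnk_nat ?mulr_natl; last lia.
    by have -> : (m.+1 - 2 * k - 1 = m - 2 * k)%N by lia.
  by rewrite Wlnk_gt ?mulr0 //; move/negbT: not_le_1mk; lia.
case: k le_km => [|k] le_km; first by rewrite Wlnk_lt0 // mulr0.
rewrite (_ : k.+1%:Z - 1 = k); last lia.
rewrite (_ : (2 <= 2 * k.+1 + 1)%N = true); last lia.
rewrite Wlnk_nat ?mulr_natl; last lia.
have -> : (m.+1 - 2 * k.+1).+1 = (m - 2 * k)%N by lia.
have -> : (m.+2 - 2 * k.+1 = m - 2 * k)%N by lia.
by have -> : (2 * k.+1 + 1 - 2 = 2 * k + 1)%N by lia.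
Qed.

Theorem mainTheorem1 :
  (forall (n : nat) (k : int), (1 <= n)%N -> 0 <= k -> k <= n%:Z ->
     Rnk n.+1 k = (k + 1)%:~R * Rnk n k + (n%:Z - k + 2)%:~R * Rnk n (k - 2))
  /\ (forall (n : nat) (k : int), (2 <= n)%N -> 0 <= k -> k <= n%:Z ->
     Wnk n k = (2 * k + 2)%:~R * Wnk (n - 1)%N k
               + (n%:Z - 2 * k)%:~R * Wnk (n - 1)%N (k - 1))
  /\ (forall (n : nat) (k : int), (1 <= n)%N -> 0 <= k -> k <= n%:Z ->
     Wlnk n k = (2 * k + 1)%:~R * Wlnk (n - 1)%N k
                + (n%:Z - 2 * k + 1)%:~R * Wlnk (n - 1)%N (k - 1)).
Proof. by split; [exact: Rnk_rec | split; [exact: Wnk_rec | exact: Wlnk_rec]]. Qed.
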